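(* Let $(V,E_1)$ and $(V,E_2)$ be finite graphs on the same vertex set $V$ and let $0\le\lambda<1$, $0\le\varepsilon<1$ be constants. Denote by $m_i(v)$ the degree of $v$ in $(V,E_i)$. Assume that $(V,E_1\cup E_2)$ is connected and that the second largest eigenvalue of the random walk on it is less than $\lambda$. If for every $v\in V$, $\frac{m_2(v)}{m_1(v)}\le\varepsilon<\frac{1-\lambda}{4}$, then $(V,E_1)$ is connected and the second largest eigenvalue of the random walk on it is less than $\lambda+4\varepsilon$.
   Context: The random walk on a finite graph $(V,E)$ is the operator $(A\phi)(v)=\frac1{m(v)}\sum_{u:\{u,v\}\in E}\phi(u)$, where $m(v)$ is the degree of $v$ (edges counted with multiplicity; in $(V,E_1\cup E_2)$ the degree is $m_1(v)+m_2(v)$); it is self-adjoint with respect to the inner product $\langle\phi,\psi\rangle=\sum_v m(v)\phi(v)\overline{\psi(v)}$, with eigenvalues in $[-1,1]$, the largest being $1$. *)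

From HB Require Import structures.
From mathcomp Require Import all_boot all_order all_algebra.
From mathcomp Require Import reals.
Set Implicit Arguments. Unset Strict Implicit. Unset Printing Implicit Defensive.
Import Order.TTheory GRing.Theory Num.Theory.
Local Open Scope ring_scope.

(* A finite (multi)graph on the vertex set V is given by its edge
   multiplicity function w : V -> V -> nat (w u v = number of edges {u,v}),
   which must be symmetric.  Loops w v v are counted once, consistently
   with the random-walk formula. *)
Definition sym_graph (V : finType) (w : V -> V -> nat) : Prop :=
  forall u v, w u v = w v u.

Definition gunion (V : finType) (w1 w2 : V -> V -> nat) : V -> V -> nat :=
  fun u v => (w1 u v + w2 u v)%N.

Definition deg (V : finType) (w : V -> V -> nat) (v : V) : nat :=
  (\sum_(u : V) w v u)%N.

Definition gconnected (V : finType) (w : V -> V -> nat) : Prop :=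
  forall u v : V, connect [rel x y | (0 < w x y)%N] u v.

Definition rw_mx (R : fieldType) (V : finType) (w : V -> V -> nat)
  : 'M[R]_#|V| :=
  \matrix_(i, j) ((w (enum_val i) (enum_val j))%:R
                   / (deg w (enum_val i))%:R).

Definition eigen_seq (R : realFieldType) (n : nat) (A : 'M[R]_n) (s : seq R)
  : Prop :=
  sorted (fun x y => y <= x) s /\ char_poly A = \prod_(x <- s) ('X - x%:P).

Definition second_eig_lt (R : realFieldType) (n : nat) (A : 'M[R]_n) (c : R)
  : Prop :=
  exists s, eigen_seq A s /\ ((1 < size s)%N -> s`_1 < c).

(* Write W for the adjacency matrix of (V, E1 u E2), D for its
   degree matrix, and likewise W1, D1, W2, D2.  The walk D^-1 W is similar to
   the Hermitian matrix D^-1/2 W D^-1/2, so by the spectral theorem (which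
   MathComp states over a closed field, hence the passage to R[i]) its second
   eigenvalue is below lam iff <fW, f> < lam <fD, f> for every f <> 0 that is
   orthogonal to the degree vector of W; conversely two eigenvalues >= c of
   the walk on E1 produce such an f with c <fD1, f> <= <fW1, f>.
   Since <fD2, f> <= eps <fD1, f> and <fD2, f> + <fW2, f> >= 0 (the signless
   Laplacian D2 + W2 is positive), the bound for W = W1 + W2 yields
   <fW1, f> < (lam + 2 eps) <fD1, f> for these f.  A disconnection of
   (V, E1) gives such an f constant on the components of E1, for which
   <fW1, f> = <fD1, f>; two eigenvalues >= lam + 4 eps give the f above.
   Both contradict the bound because lam + 2 eps < 1. *)

From HB Require Import structures.
From mathcomp Require Import all_boot all_order all_algebra.
From mathcomp Require Import reals.
From mathcomp Require Import ring lra.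
From mathcomp.real_closed Require Import complex.
Import Order.TTheory GRing.Theory Num.Theory.
Set Implicit Arguments. Unset Strict Implicit. Unset Printing Implicit Defensive.
Local Open Scope ring_scope.
Local Open Scope sesquilinear_scope.

Local Notation "''[' u , v ]" := (dotmx u v) : ring_scope.

Lemma char_poly_similar (R : comNzRingType) n (M P Q : 'M[R]_n) :
  Q *m P = 1%:M -> char_poly (Q *m M *m P) = char_poly M.
Proof.
move=> QP; rewrite /char_poly.
have -> : char_poly_mx (Q *m M *m P) =
    map_mx polyC Q *m char_poly_mx M *m map_mx polyC P.
  rewrite /char_poly_mx mulmxBr mulmxBl -!map_mxM.
  by rewrite scalar_mxC -(mulmxA 'X%:M) -map_mxM QP map_mx1 mulmx1.
by rewrite !det_mulmx mulrAC -det_mulmx -map_mxM QP map_mx1 det1 mul1r.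
Qed.

Section Spectral.
Variables (C : numClosedFieldType) (n : nat).

Lemma dotmx_mulmxl (u v : 'rV[C]_n) (M : 'M_n) : '[u *m M, v] = '[u, v *m M^t*].
Proof. by rewrite !dotmxE trmx_mul map_mxM trmxCK mulmxA. Qed.

Lemma dotmx_mulmxr (u v : 'rV[C]_n) (M : 'M_n) : '[u, v *m M] = '[u *m M^t*, v].
Proof. by rewrite dotmx_mulmxl trmxCK. Qed.

Lemma dotmx_diag (u v d : 'rV[C]_n) :
  '[u *m diag_mx d, v] = \sum_k d 0 k * (u 0 k * (v 0 k)^*).
Proof.
rewrite dotmxE mxE; apply: eq_bigr => k _.
by rewrite mul_mx_diag !mxE mulrAC mulrC.
Qed.

Lemma dotmx_sum (u v : 'rV[C]_n) : '[u, v] = \sum_k u 0 k * (v 0 k)^*.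
Proof. by rewrite dotmxE mxE; apply: eq_bigr => k _; rewrite !mxE. Qed.

Lemma row_neq0_entry (y : 'rV[C]_n) : y != 0 -> exists k, y 0 k != 0.
Proof.
move=> y_neq0; apply/existsP; apply: contraNT y_neq0 => /existsPn y0.
by apply/eqP/rowP => k; rewrite mxE; apply/eqP; rewrite -[_ == _]negbK y0.
Qed.

Definition spectrum (A : 'M[C]_n) := [seq spectral_diag A 0 k | k <- enum 'I_n].

Lemma count_spectrum (A : 'M[C]_n) (p : pred C) :
  count p (spectrum A) = #|[pred k | p (spectral_diag A 0 k)]|.
Proof.
rewrite count_map cardE /enum_mem size_filter count_filter.
by apply: eq_count => k; rewrite !inE andbT.
Qed.

Section Hermitian.
Variable S : 'M[C]_n.
Hypothesis S_herm : S \is hermsymmx.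
Let P := spectralmx S.
Let e := spectral_diag S.

Let P_Padj : P *m P^t* = 1%:M.
Proof. exact/unitarymxP/spectral_unitarymx. Qed.

Let Padj_P : P^t* *m P = 1%:M.
Proof. by rewrite -invmx_unitary ?spectral_unitarymx // mulVmx ?spectral_unit. Qed.

Lemma hermitian_spectral_decomposition : S = P^t* *m diag_mx e *m P.
Proof.
have /orthomx_spectralP -> := hermitian_normalmx S_herm.
by rewrite invmx_unitary ?spectral_unitarymx.
Qed.

Lemma spectrum_real : all (fun x => x \is Num.real) (spectrum S).
Proof.
apply/allP => _ /mapP[k _ ->].
by have /mxOverP := hermitian_spectral_diag_real S_herm; apply.
Qed.

Lemma char_poly_hermitian : char_poly S = \prod_(x <- spectrum S) ('X - x%:P).
Proof.
rewrite {1}hermitian_spectral_decomposition char_poly_similar //.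
rewrite char_poly_trig ?diag_mx_is_trig // big_map big_enum /=.
by apply: eq_bigr => k _; rewrite mxE eqxx mulr1n.
Qed.

Lemma dotmx_spectral u : '[u *m S, u] = \sum_k e 0 k * ((u *m P^t*) 0 k * ((u *m P^t*) 0 k)^*).
Proof.
rewrite {1}hermitian_spectral_decomposition -dotmx_diag !mulmxA.
by rewrite dotmx_mulmxl -!mulmxA.
Qed.

Lemma dotmx_unitary u v : '[u, v] = '[u *m P^t*, v *m P^t*].
Proof. by rewrite dotmx_mulmxl trmxCK -mulmxA Padj_P mulmx1. Qed.

Lemma hermitian_rayleigh_lt (lam mu : C) (u0 : 'rV_n) :
  u0 != 0 -> u0 *m S = mu *: u0 -> ~~ (mu < lam) ->
  (count (fun x => ~~ (x < lam)%R) (spectrum S) <= 1)%N ->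
  forall x : 'rV_n, x != 0 -> '[x, u0] = 0 -> '[x *m S, x] < lam * '[x, x].
Proof.
(* In the eigenbasis, [u0] lives on the only coordinate [k0] whose eigenvalue
   is not below [lam], and [x] vanishes there. *)
move=> u0_neq0 u0_eig mu_lam; rewrite count_spectrum => /card_le1_eqP e_lam x x_neq0 x_u0.
set y := x *m P^t*; set y0 := u0 *m P^t*.
have y0_eig k : y0 0 k * e 0 k = mu * y0 0 k.
  suff /rowP/(_ k) : y0 *m diag_mx e = mu *: y0 by rewrite mul_mx_diag !mxE.
  rewrite /y0 scalemxAl -u0_eig hermitian_spectral_decomposition !mulmxA.
  by rewrite -(mulmxA _ P) P_Padj mulmx1.
have [k0 y0k0_neq0] : exists k, y0 0 k != 0.
  apply: row_neq0_entry; apply: contraNneq u0_neq0 => y0_eq0.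
  by rewrite -[u0]mulmx1 -Padj_P mulmxA -/y0 y0_eq0 mul0mx.
have e_k0 : e 0 k0 = mu by apply: (mulIf y0k0_neq0); rewrite mulrC y0_eig.
have e_lt k : k != k0 -> e 0 k < lam.
  move=> k_neq_k0; apply: contraNT k_neq_k0 => e_k; apply/eqP.
  by apply: e_lam; rewrite inE ?e_k0.
have y0_k k : k != k0 -> y0 0 k = 0.
  move=> k_neq_k0; apply: contraTeq (e_lt _ k_neq_k0) => y0k_neq0.
  suff -> : e 0 k = mu by [].
  by apply: (mulIf y0k_neq0); rewrite mulrC y0_eig.
have y_k0 : y 0 k0 = 0.
  move: x_u0; rewrite dotmx_unitary -/y -/y0 dotmx_sum (bigD1 k0) //= big1 ?addr0.
    by move/eqP; rewrite mulf_eq0 conjC_eq0 (negbTE y0k0_neq0) orbF => /eqP.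
  by move=> k /y0_k ->; rewrite conjC0 mulr0.
have [k1 yk1_neq0] : exists k, y 0 k != 0.
  apply: row_neq0_entry; apply: contraNneq x_neq0 => y_eq0.
  by rewrite -[x]mulmx1 -Padj_P mulmxA -/y y_eq0 mul0mx.
have k1_neq_k0 : k1 != k0 by apply: contraTneq yk1_neq0 => ->; rewrite y_k0 eqxx.
rewrite dotmx_spectral [in X in _ < X]dotmx_unitary -/y dotmx_sum mulr_sumr.
rewrite (bigD1 k1) //= [X in _ < X](bigD1 k1) //=.
apply: ltr_leD; first by rewrite ltr_pM2r ?mul_conjC_gt0 ?e_lt.
apply: ler_sum => k _; have [->|k_neq_k0] := eqVneq k k0.
  by rewrite y_k0 mul0r !mulr0.
by rewrite ler_wpM2r ?mul_conjC_ge0 ?ltW ?e_lt.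
Qed.

Lemma hermitian_rayleigh_ge (c : C) (g : 'rV_n) :
  (1 < count (fun x => c <= x)%R (spectrum S))%N ->
  exists2 x : 'rV_n, x != 0 & '[x, g] = 0 /\ c * '[x, x] <= '[x *m S, x].
Proof.
rewrite count_spectrum => /card_gt1P[k0 [k1 [c_k0 c_k1 k01]]].
set p0 := row k0 P; set p1 := row k1 P.
have row_eig k : row k P *m S = e 0 k *: row k P.
  have PS : P *m S = diag_mx e *m P.
    by rewrite hermitian_spectral_decomposition !mulmxA P_Padj mul1mx.
  by rewrite -row_mul PS mul_diag_mx; apply/rowP => j; rewrite !mxE.
have /row_unitarymxP P_orth := spectral_unitarymx S.
set al := '[p0, g]; set be := '[p1, g].
(* A nonzero solution of [a * al + b * be = 0]. *)
pose a : C := if al == 0 then 1 else be.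
pose b : C := if al == 0 then 0 else - al.
have ab_gt0 : 0 < a * a^* + b * b^*.
  rewrite /a /b; case: ifP => [_|al_neq0].
    by rewrite conjC1 conjC0 mulr0 addr0 mulr1 ltr01.
  by rewrite ltr_wpDl ?mul_conjC_ge0 // mul_conjC_gt0 oppr_eq0 al_neq0.
have dot_ab (u v : C) : '[u *: p0 + v *: p1, a *: p0 + b *: p1] = u * a^* + v * b^*.
  rewrite linearDl !linearZl_LR /= !linearDr !linearZr_LR /= !P_orth.
  by rewrite !eqxx (negbTE k01) eq_sym (negbTE k01) !mulr1 !mulr0 addr0 add0r.
exists (a *: p0 + b *: p1); last split.
- apply: contraTneq ab_gt0 => ab_eq0.
  by rewrite -dot_ab ab_eq0 linear0l ltxx.
- rewrite linearDl !linearZl_LR /= -/al -/be /a /b.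
  by case: ifP => [/eqP ->|_]; ring.
- rewrite mulmxDl -!scalemxAl !row_eig !scalerA dot_ab (dot_ab (a * _)) mulrDr.
  rewrite mulrAC [b * _ * _]mulrAC ![_ * _^* * _]mulrC.
  by rewrite !inE in c_k0 c_k1; apply: lerD; rewrite ler_wpM2r ?mul_conjC_ge0.
Qed.

End Hermitian.
End Spectral.

Definition degrow (R : pzSemiRingType) n (W : 'M[R]_n) : 'rV[R]_n := \row_i \sum_j W i j.
Definition degmx (R : pzSemiRingType) n (W : 'M[R]_n) := diag_mx (degrow W).
Definition walkmx (R : fieldType) n (W : 'M[R]_n) : 'M[R]_n :=
  \matrix_(i, j) (W i j / degrow W 0 i).
Definition isqrt_degmx (C : numClosedFieldType) n (W : 'M[C]_n) :=
  diag_mx (map_mx (fun x => (sqrtC x)^-1) (degrow W)).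
Definition normadjmx (C : numClosedFieldType) n (W : 'M[C]_n) :=
  isqrt_degmx W *m W *m isqrt_degmx W.

Lemma degrowD (R : pzSemiRingType) n (W1 W2 : 'M[R]_n) :
  degrow (W1 + W2) = degrow W1 + degrow W2.
Proof. by apply/rowP => i; rewrite !mxE -big_split; apply: eq_bigr => j _; rewrite mxE. Qed.

Lemma degmxD (R : pzSemiRingType) n (W1 W2 : 'M[R]_n) :
  degmx (W1 + W2) = degmx W1 + degmx W2.
Proof. by rewrite /degmx degrowD raddfD. Qed.

Section Symmetric.
Variables (C : numClosedFieldType) (n : nat) (W : 'M[C]_n).
Hypothesis W_sym : W^T = W.

Lemma sym_entry i j : W i j = W j i.
Proof. by rewrite -{1}W_sym mxE. Qed.

Lemma colsum_sym : const_mx 1 *m W = degrow W.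
Proof.
apply/rowP => j; rewrite !mxE; apply: eq_bigr => i _.
by rewrite mxE mul1r sym_entry.
Qed.

Lemma mulmx_degmx_locally_constant (f : 'rV[C]_n) :
  (forall i j, W i j != 0 -> f 0 i = f 0 j) -> f *m W = f *m degmx W.
Proof.
move=> f_lc; apply/rowP => j; rewrite mul_mx_diag !mxE mulr_sumr.
apply: eq_bigr => i _; rewrite sym_entry.
by have [->|/f_lc ->] := eqVneq (W j i) 0; rewrite ?mulr0 // mulrC.
Qed.

Hypothesis W_ge0 : forall i j, 0 <= W i j.

Lemma dotmx_signless_laplacian_ge0 (f : 'rV[C]_n) : 0 <= '[f *m degmx W, f] + '[f *m W, f].
Proof.
have swap (F : 'I_n -> 'I_n -> C) :
    \sum_i \sum_j W i j * F j i = \sum_i \sum_j W i j * F i j.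
  by rewrite exchange_big; apply: eq_bigr => i _; apply: eq_bigr => j _; rewrite sym_entry.
have deg_form : '[f *m degmx W, f] = \sum_i \sum_j W i j * (f 0 i * (f 0 i)^*).
  by rewrite dotmx_diag; apply: eq_bigr => i _; rewrite mxE mulr_suml.
have adj_form : '[f *m W, f] = \sum_i \sum_j W i j * (f 0 i * (f 0 j)^*).
  rewrite dotmx_sum exchange_big; apply: eq_bigr => j _.
  by rewrite mxE mulr_suml; apply: eq_bigr => i _; rewrite mulrA [f 0 i * _]mulrC.
rewrite -(pmulrn_lge0 _ (isT : 0 < 2)%N).
have -> : ('[f *m degmx W, f] + '[f *m W, f]) *+ 2 =
    \sum_i \sum_j W i j * ((f 0 i + f 0 j) * (f 0 i + f 0 j)^*).
  transitivity (\sum_i \sum_j W i j * (f 0 i * (f 0 i)^*) +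
      \sum_i \sum_j W i j * (f 0 j * (f 0 j)^*) +
      (\sum_i \sum_j W i j * (f 0 i * (f 0 j)^*) +
       \sum_i \sum_j W i j * (f 0 j * (f 0 i)^*))).
    rewrite (swap (fun a _ => f 0 a * (f 0 a)^*)) (swap (fun a b => f 0 a * (f 0 b)^*)) /=.
    by rewrite deg_form adj_form mulr2n addrACA.
  rewrite -!big_split; apply: eq_bigr => i _; rewrite -!big_split.
  by apply: eq_bigr => j _ /=; rewrite rmorphD; ring.
by rewrite sumr_ge0 // => i _; rewrite sumr_ge0 // => j _; rewrite mulr_ge0 ?mul_conjC_ge0.
Qed.

End Symmetric.

Lemma diag_mx_adjoint (C : numClosedFieldType) n (r : 'rV[C]_n) :
  (forall i, r 0 i \is Num.real) -> (diag_mx r)^t* = diag_mx r.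
Proof.
move=> r_real; rewrite tr_diag_mx map_diag_mx; congr diag_mx.
by apply/rowP => i; rewrite mxE /= conj_Creal.
Qed.

Section Normalized.
Variables (C : numClosedFieldType) (n : nat) (W : 'M[C]_n).
Hypothesis W_sym : W^T = W.
Hypothesis W_ge0 : forall i j, 0 <= W i j.
Hypothesis degrow_gt0 : forall i, 0 < degrow W 0 i.

Let sqrtD := diag_mx (map_mx sqrtC (degrow W)).
Let isqrtD := isqrt_degmx W.

Let sqrt_deg_neq0 i : sqrtC (\sum_j W i j) != 0.
Proof. by have := degrow_gt0 i; rewrite mxE -sqrtC_gt0 => /gt_eqF ->. Qed.

Let sqrtD_adj : sqrtD^t* = sqrtD.
Proof. by apply: diag_mx_adjoint => i; rewrite mxE sqrtC_real ?ltW. Qed.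

Let isqrtD_adj : isqrtD^t* = isqrtD.
Proof. by apply: diag_mx_adjoint => i; rewrite mxE realV sqrtC_real ?ltW. Qed.

Let sqrtD_isqrtD : sqrtD *m isqrtD = 1%:M.
Proof.
rewrite mulmx_diag -diag_const_mx; congr diag_mx.
by apply/rowP => i; rewrite !mxE divff.
Qed.

Let isqrtD_sqrtD : isqrtD *m sqrtD = 1%:M.
Proof. by rewrite diag_mxC sqrtD_isqrtD. Qed.

Let sqrtD_sqrtD : sqrtD *m sqrtD = degmx W.
Proof.
by rewrite mulmx_diag; congr diag_mx; apply/rowP => i; rewrite !mxE -expr2 sqrtCK.
Qed.

Lemma normadjmx_hermitian : normadjmx W \is hermsymmx.
Proof.
apply/is_hermitianmxP; rewrite expr0 scale1r !trmx_mul !map_mxM -/isqrtD isqrtD_adj.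
suff -> : W^t* = W by rewrite mulmxA.
by rewrite -[RHS]W_sym; apply/matrixP => i j; rewrite !mxE conj_Creal ?ger0_real.
Qed.

Lemma char_poly_walkmx : char_poly (walkmx W) = char_poly (normadjmx W).
Proof.
rewrite -[RHS](char_poly_similar _ isqrtD_sqrtD); congr char_poly.
rewrite /normadjmx -/isqrtD !mulmxA -(mulmxA _ isqrtD) isqrtD_sqrtD mulmx1 mulmx_diag mul_diag_mx.
apply/matrixP => i j; by rewrite !mxE -invfM -expr2 sqrtCK mulrC.
Qed.

Lemma degrow_isqrt_eigen : degrow W *m isqrtD *m normadjmx W = degrow W *m isqrtD.
Proof.
rewrite /normadjmx -/isqrtD !mulmxA.
have -> : degrow W *m isqrtD *m isqrtD = const_mx 1.
  rewrite -mulmxA mulmx_diag mul_mx_diag; apply/rowP => i.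
  by rewrite !mxE -invfM -expr2 sqrtCK divff // -sqrtC_eq0 sqrt_deg_neq0.
by rewrite colsum_sym.
Qed.

Lemma dotmx_sqrt_normadjmx f : '[f *m sqrtD *m normadjmx W, f *m sqrtD] = '[f *m W, f].
Proof.
rewrite /normadjmx -/isqrtD !mulmxA -(mulmxA f) sqrtD_isqrtD mulmx1 dotmx_mulmxl isqrtD_adj.
by rewrite -mulmxA sqrtD_isqrtD mulmx1.
Qed.

Lemma dotmx_sqrt_degmx f : '[f *m sqrtD, f *m sqrtD] = '[f *m degmx W, f].
Proof. by rewrite dotmx_mulmxr sqrtD_adj -mulmxA sqrtD_sqrtD. Qed.

Lemma dotmx_sqrt_isqrt f g : '[f *m sqrtD, g *m isqrtD] = '[f, g].
Proof. by rewrite dotmx_mulmxl sqrtD_adj -mulmxA isqrtD_sqrtD mulmx1. Qed.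

Lemma degree_rayleigh_lt (lam : C) : lam < 1 ->
  (count (fun x => ~~ (x < lam)%R) (spectrum (normadjmx W)) <= 1)%N ->
  forall f : 'rV_n, f != 0 -> '[f, degrow W] = 0 ->
  '[f *m W, f] < lam * '[f *m degmx W, f].
Proof.
move=> lam_lt1 count_lam f f_neq0 f_orth; have [k _] := row_neq0_entry f_neq0.
rewrite -dotmx_sqrt_normadjmx -dotmx_sqrt_degmx.
apply: (hermitian_rayleigh_lt normadjmx_hermitian (mu := 1) (u0 := degrow W *m isqrtD)).
- apply: contraTneq (degrow_gt0 k) => u0_eq0.
  by rewrite -[degrow W]mulmx1 -isqrtD_sqrtD mulmxA u0_eq0 mul0mx mxE ltxx.
- by rewrite degrow_isqrt_eigen scale1r.
- by rewrite lt_gtF.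
- exact: count_lam.
- apply: contraNneq f_neq0 => fsqrtD_eq0.
  by rewrite -[f]mulmx1 -sqrtD_isqrtD mulmxA fsqrtD_eq0 mul0mx.
- by rewrite dotmx_sqrt_isqrt.
Qed.

Lemma degree_rayleigh_ge (c : C) (g : 'rV_n) :
  (1 < count (fun x => c <= x)%R (spectrum (normadjmx W)))%N ->
  exists2 f : 'rV_n, f != 0 & '[f, g] = 0 /\ c * '[f *m degmx W, f] <= '[f *m W, f].
Proof.
move=> /(hermitian_rayleigh_ge normadjmx_hermitian (g *m isqrtD))[x x_neq0 [x_g x_ge]].
have x_K : x *m isqrtD *m sqrtD = x by rewrite -mulmxA isqrtD_sqrtD mulmx1.
exists (x *m isqrtD).
  by apply: contraNneq x_neq0 => xisqrtD_eq0; rewrite -x_K xisqrtD_eq0 mul0mx.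
by rewrite -dotmx_sqrt_isqrt -dotmx_sqrt_normadjmx -dotmx_sqrt_degmx x_K.
Qed.

End Normalized.

Lemma perturbed_form_lt (R : numDomainType) (lam eps N1 N2 H1 H2 : R) :
  0 <= lam <= 1 -> 0 <= eps -> 0 <= N1 -> N2 <= eps * N1 -> 0 <= N2 + H2 ->
  H1 + H2 < lam * (N1 + N2) -> H1 < (lam + 2 * eps) * N1.
Proof.
move=> /andP[lam_ge0 lam_le1] eps_ge0 N1_ge0 N2_le N2H2_ge0 H_lt; rewrite -subr_gt0.
have -> : (lam + 2 * eps) * N1 - H1 = lam * (N1 + N2) - (H1 + H2) +
    ((N2 + H2) + ((1 + lam) * (eps * N1 - N2) + (1 - lam) * (eps * N1))) by ring.
by rewrite ltr_wpDr ?subr_gt0 // addr_ge0 // addr_ge0 ?mulr_ge0 ?subr_ge0 ?addr_ge0 ?ler01.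
Qed.

Section Perturbation.
Variables (C : numClosedFieldType) (n : nat) (W1 W2 : 'M[C]_n) (lam eps : C).
Hypotheses (W1_sym : W1^T = W1) (W1_ge0 : forall i j, 0 <= W1 i j).
Hypotheses (W2_sym : W2^T = W2) (W2_ge0 : forall i j, 0 <= W2 i j).
Hypothesis degrow1_gt0 : forall i, 0 < degrow W1 0 i.
Hypothesis degrow2_le : forall i, degrow W2 0 i <= eps * degrow W1 0 i.
Hypotheses (lam_ge0 : 0 <= lam) (lam_lt1 : lam < 1) (eps_ge0 : 0 <= eps).
Hypothesis second_lt_lam :
  (count (fun x => ~~ (x < lam)%R) (spectrum (normadjmx (W1 + W2))) <= 1)%N.

Lemma subgraph_rayleigh_lt (a : C) (f : 'rV_n) :
  lam + 2 * eps <= a -> f != 0 -> '[f, degrow (W1 + W2)] = 0 ->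
  '[f *m W1, f] < a * '[f *m degmx W1, f].
Proof.
move=> a_ge f_neq0 f_orth.
have N1_ge0 : 0 <= '[f *m degmx W1, f].
  by rewrite /degmx dotmx_diag sumr_ge0 // => i _; rewrite mulr_ge0 ?mul_conjC_ge0 ?ltW.
apply: (lt_le_trans _ (ler_wpM2r N1_ge0 a_ge)).
have W_sym : (W1 + W2)^T = W1 + W2 by rewrite linearD /= W1_sym W2_sym.
have W_ge0 i j : 0 <= (W1 + W2) i j by rewrite mxE addr_ge0.
have degW_gt0 i : 0 < degrow (W1 + W2) 0 i.
  by rewrite degrowD mxE ltr_wpDr // mxE sumr_ge0.
have := degree_rayleigh_lt W_sym W_ge0 degW_gt0 lam_lt1 second_lt_lam f_neq0 f_orth.
rewrite degmxD !mulmxDr !linearDl /=.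
apply: perturbed_form_lt => //.
- by rewrite lam_ge0 ltW.
- rewrite /degmx !dotmx_diag mulr_sumr ler_sum // => i _.
  by rewrite [leRHS]mulrA ler_wpM2r ?mul_conjC_ge0.
- exact: dotmx_signless_laplacian_ge0.
Qed.

End Perturbation.

Section Graphs.
Variable V : finType.

Definition adjmx (R : pzSemiRingType) (w : V -> V -> nat) : 'M[R]_#|V| :=
  \matrix_(i, j) (w (enum_val i) (enum_val j))%:R.

Lemma adjmx_gunion (R : pzSemiRingType) w1 w2 :
  adjmx R (gunion w1 w2) = adjmx R w1 + adjmx R w2.
Proof. by apply/matrixP => i j; rewrite !mxE natrD. Qed.

Lemma adjmx_sym (R : pzSemiRingType) w : sym_graph w -> (adjmx R w)^T = adjmx R w.
Proof. by move=> w_sym; apply/matrixP => i j; rewrite !mxE w_sym. Qed.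

Lemma degrow_adjmx (R : pzSemiRingType) w i :
  degrow (adjmx R w) 0 i = (deg w (enum_val i))%:R.
Proof.
rewrite mxE /deg natr_sum [RHS](reindex _ (onW_bij _ (enum_val_bij V))).
by apply: eq_bigr => j _; rewrite mxE.
Qed.

Lemma adjmx_ge0 (R : numDomainType) w i j : 0 <= adjmx R w i j.
Proof. by rewrite mxE ler0n. Qed.

Lemma degrow_adjmx_gt0 (R : numDomainType) w :
  (forall v, 0 < deg w v)%N -> forall i, 0 < degrow (adjmx R w) 0 i.
Proof. by move=> deg_gt0 i; rewrite degrow_adjmx ltr0n. Qed.

Lemma rw_mxE (R : fieldType) w : rw_mx R w = walkmx (adjmx R w).
Proof. by apply/matrixP => i j; rewrite [LHS]mxE [RHS]mxE degrow_adjmx mxE. Qed.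

Lemma map_rw_mx (R R' : fieldType) (f : {rmorphism R -> R'}) (w : V -> V -> nat) :
  map_mx f (rw_mx R w) = rw_mx R' w.
Proof. by apply/matrixP => i j; rewrite !mxE fmorph_div !rmorph_nat. Qed.

Lemma locally_constant_orth_gconnected (C : numClosedFieldType) w (d : 'rV[C]_#|V|) :
  sym_graph w -> (forall i, 0 < d 0 i) ->
  (forall f : 'rV_#|V|, (forall i j, adjmx C w i j != 0 -> f 0 i = f 0 j) ->
     '[f, d] = 0 -> f = 0) ->
  gconnected w.
Proof.
move=> w_sym d_gt0 lc_orth_eq0 u v; apply: contraT => not_uv.
set e := [rel x y | (0 < w x y)%N].
have e_sym : symmetric e by move=> x y; rewrite /= w_sym.
have e_closed := connect_closed (sym_connect_sym e_sym) u.
(* [f] is the indicator of the component of [u] minus its [d]-weighted mean. *)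
pose t : 'rV[C]_#|V| := \row_i (connect e u (enum_val i))%:R.
have one_d_gt0 : 0 < '[const_mx 1, d].
  rewrite dotmx_sum (bigD1 (enum_rank u)) //= ltr_pwDl ?sumr_ge0 // => [|i _];
    by rewrite mxE mul1r conj_Creal ?gtr0_real ?ltW.
pose f := t - ('[t, d] / '[const_mx 1, d]) *: const_mx 1.
have f_eq0 : f = 0.
  apply: lc_orth_eq0 => [i j|].
    by rewrite !mxE pnatr_eq0 -lt0n => /e_closed; rewrite !inE => ->.
  by rewrite linearBl linearZl_LR /= divfK ?subrr ?gt_eqF.
have /rowP/(_ (enum_rank u)) := f_eq0; have /rowP/(_ (enum_rank v)) := f_eq0.
rewrite !mxE !enum_rankK connect0 (negbTE not_uv) => <-.
by move/addIr/eqP; rewrite oner_eq0.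
Qed.

End Graphs.

Lemma sorted_second_ltP (R : realDomainType) (s : seq R) (c : R) :
  sorted (fun x y => y <= x) s ->
  ((1 < size s)%N -> s`_1 < c) <-> (count (fun x => c <= x)%R s <= 1)%N.
Proof.
case: s => [|a [|b t]] //=; first by rewrite addn0 leq_b1.
move=> /andP[b_le_a t_sorted]; split=> [/(_ isT) b_lt_c|count_le1 _].
  have t_lt_c : all (fun x => x < c) t.
    apply/allP => x x_t; apply: (le_lt_trans _ b_lt_c).
    have ge_trans : transitive (fun x y : R => y <= x).
      by move=> y1 y2 y3 y12 y31; apply: le_trans y12.
    by move/allP: (order_path_min ge_trans t_sorted); apply.
  have -> : (c <= b) = false by rewrite leNgt b_lt_c.
  rewrite add0n (@eq_in_count _ _ pred0) ?count_pred0 ?addn0 ?leq_b1 // => x x_t.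
  by rewrite /= leNgt (allP t_lt_c x x_t).
rewrite ltNge; apply: contraTN count_le1 => c_le_b.
by rewrite c_le_b (le_trans c_le_b b_le_a).
Qed.

Local Notation toC := (real_complex _).

Section Complexification.
Variables (R : rcfType) (n : nat) (A : 'M[R]_n) (S : 'M[R[i]]_n).
Hypothesis S_herm : S \is hermsymmx.
Hypothesis char_poly_AS : char_poly (map_mx toC A) = char_poly S.

Lemma eigen_seq_spectrum_count (s : seq R) (p : pred R[i]) :
  eigen_seq A s -> count p (spectrum S) = count (fun x => p (toC x)) s.
Proof.
move=> [_ char_A]; suff /permP/(_ p) -> : perm_eq (spectrum S) (map toC s).
  by rewrite count_map.
apply: prod_XsubC_eq; rewrite -char_poly_hermitian // -char_poly_AS -map_char_poly.
by rewrite char_A map_prod_XsubC big_map.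
Qed.

Lemma eigen_seq_sort_spectrum :
  eigen_seq A (sort (fun x y => y <= x) [seq complex.Re x | x <- spectrum S]).
Proof.
split; first by apply: sort_sorted => x y; apply: le_total.
apply: (map_poly_inj toC); rewrite map_char_poly char_poly_AS char_poly_hermitian //.
rewrite map_prod_XsubC (perm_big _ (permEl (perm_sort _ _))) [RHS]big_map.
apply: eq_big_seq => x x_spec; congr (_ - _%:P).
exact/esym/RRe_real/(allP (spectrum_real S_herm)).
Qed.

End Complexification.

Section WalkSpectrum.
Variables (R : rcfType) (V : finType) (w : V -> V -> nat).
Hypothesis w_sym : sym_graph w.
Hypothesis deg_gt0 : forall v, (0 < deg w v)%N.

Let W := adjmx R[i] w.

Let W_herm : normadjmx W \is hermsymmx.
Proof.
exact: normadjmx_hermitian (adjmx_sym _ w_sym) (@adjmx_ge0 _ _ w) (degrow_adjmx_gt0 _ deg_gt0).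
Qed.

Let char_poly_rw_mx : char_poly (map_mx toC (rw_mx R w)) = char_poly (normadjmx W).
Proof. by rewrite map_rw_mx rw_mxE (char_poly_walkmx (degrow_adjmx_gt0 _ deg_gt0)). Qed.

Lemma rw_mx_spectrum_count (s : seq R) (p : pred R[i]) :
  eigen_seq (rw_mx R w) s -> count p (spectrum (normadjmx W)) = count (fun x => p (toC x)) s.
Proof. exact: eigen_seq_spectrum_count W_herm char_poly_rw_mx s p. Qed.

Lemma rw_mx_eigen_seq :
  eigen_seq (rw_mx R w) (sort (fun x y => y <= x) [seq complex.Re x | x <- spectrum (normadjmx W)]).
Proof. exact: eigen_seq_sort_spectrum W_herm char_poly_rw_mx. Qed.

End WalkSpectrum.

Section TwoGraphs.
Variables (R : realType) (V : finType) (w1 w2 : V -> V -> nat) (lam eps : R).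
Hypotheses (sym1 : sym_graph w1) (sym2 : sym_graph w2).
Hypotheses (lam_ge0 : 0 <= lam) (lam_lt1 : lam < 1) (eps_ge0 : 0 <= eps).
Hypothesis deg1_gt0 : forall v, (0 < deg w1 v)%N.
Hypothesis deg_ratio : forall v, (deg w2 v)%:R / (deg w1 v)%:R <= eps.
Hypothesis union_second_lt : second_eig_lt (rw_mx R (gunion w1 w2)) lam.

Local Notation W1 := (adjmx R[i] w1).
Local Notation W2 := (adjmx R[i] w2).

Let degrow2_le i : degrow W2 0 i <= toC eps * degrow W1 0 i.
Proof.
by rewrite !degrow_adjmx -!(rmorph_nat toC) -rmorphM lecR -ler_pdivrMr ?ltr0n ?deg_ratio.
Qed.

Let union_count_lt :
  (count (fun x => ~~ (x < toC lam)%R) (spectrum (normadjmx (W1 + W2))) <= 1)%N.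
Proof.
have union_sym : sym_graph (gunion w1 w2) by move=> u v; rewrite /gunion sym1 sym2.
have union_deg v : (0 < deg (gunion w1 w2) v)%N.
  by rewrite /deg /gunion big_split ltn_addr //; apply: deg1_gt0.
have [s [s_eig s_second]] := union_second_lt.
rewrite -adjmx_gunion (rw_mx_spectrum_count union_sym union_deg _ s_eig).
rewrite (eq_count (a2 := fun x => lam <= x)) => [|x]; last by rewrite /= ltcR -leNgt.
by have /(sorted_second_ltP _ s_eig.1) := s_second.
Qed.

Lemma gunion_subgraph_rayleigh_lt (a : R) (f : 'rV[R[i]]_#|V|) :
  lam + 2 * eps <= a -> f != 0 -> '[f, degrow (W1 + W2)] = 0 ->
  '[f *m W1, f] < toC a * '[f *m degmx W1, f].
Proof.
move=> a_ge; apply: (subgraph_rayleigh_lt (adjmx_sym _ sym1) (@adjmx_ge0 _ _ w1)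
  (adjmx_sym _ sym2) (@adjmx_ge0 _ _ w2) (degrow_adjmx_gt0 _ deg1_gt0) degrow2_le
  _ _ _ union_count_lt).
- by rewrite -(rmorph0 toC) lecR.
- by rewrite -(rmorph1 toC) ltcR.
- by rewrite -(rmorph0 toC) lecR.
- by rewrite -(rmorph_nat toC 2) -rmorphM -rmorphD lecR.
Qed.

End TwoGraphs.

Theorem lemma4p12 (R : realType) (V : finType) (w1 w2 : V -> V -> nat)
  (lam eps : R) :
  sym_graph w1 -> sym_graph w2 ->
  0 <= lam -> lam < 1 -> 0 <= eps -> eps < 1 ->
  gconnected (gunion w1 w2) ->
  second_eig_lt (rw_mx R (gunion w1 w2)) lam ->
  (forall v : V, (0 < deg w1 v)%N) ->
  (forall v : V, (deg w2 v)%:R / (deg w1 v)%:R <= eps) ->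
  eps < (1 - lam) / 4 ->
  gconnected w1 /\ second_eig_lt (rw_mx R w1) (lam + 4 * eps).
Proof.
(* [eps < 1] and the connectivity of the union follow from the other hypotheses. *)
move=> sym1 sym2 lam_ge0 lam_lt1 eps_ge0 _ _ union_second deg1_gt0 deg_ratio eps_lt.
have le1 : lam + 2 * eps <= 1 by lra.
have le4 : lam + 2 * eps <= lam + 4 * eps by lra.
have W1_sym := adjmx_sym R[i] sym1.
have union_deg_gt0 i : 0 < degrow (adjmx R[i] w1 + adjmx R[i] w2) 0 i.
  by rewrite degrowD mxE !degrow_adjmx -natrD ltr0n ltn_addr.
have W1_lt := gunion_subgraph_rayleigh_lt sym1 sym2 lam_ge0 lam_lt1 eps_ge0 deg1_gt0 deg_ratio
  union_second.
split.
  apply: (locally_constant_orth_gconnected (d := degrow _) sym1 union_deg_gt0) => f f_lc f_orth.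
  have [//|f_neq0] := eqVneq f 0.
  have := W1_lt 1 f le1 f_neq0 f_orth.
  by rewrite (mulmx_degmx_locally_constant W1_sym f_lc) rmorph1 mul1r ltxx.
have s_eig := rw_mx_eigen_seq R sym1 deg1_gt0.
eexists; split; first exact: s_eig.
apply/(sorted_second_ltP _ s_eig.1); rewrite leqNgt; apply/negP.
rewrite -(eq_count (a1 := fun x => toC (lam + 4 * eps) <= toC x)) => [|x]; last exact: lecR.
rewrite -(rw_mx_spectrum_count sym1 deg1_gt0 _ s_eig).
move=> /(degree_rayleigh_ge W1_sym (@adjmx_ge0 _ _ w1) (degrow_adjmx_gt0 _ deg1_gt0)
  (degrow (adjmx R[i] w1 + adjmx R[i] w2)))[f f_neq0 [f_orth f_ge]].
have := W1_lt _ f le4 f_neq0 f_orth.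
by move=> H_lt; have := lt_le_trans H_lt f_ge; rewrite ltxx.
Qed.
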